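(* Let $(\mathcal A,d)$ be a DGA and let $a,b_1,\dots,b_n\in\mathcal A$ be closed with $|a|$ even and each $a\wedge b_i$ exact. The indeterminacy $\{x-x' : x,x'\in\langle a;b_1,\dots,b_n\rangle\}$ of the $a$-Massey product $\langle a;b_1,\dots,b_n\rangle$ is a subset of $$\sum_{j=1}^n\langle a;b_1,\dots,\widehat{b_j},\dots,b_n\rangle\wedge H(\mathcal A),$$ where $\widehat{b_j}$ means $b_j$ is omitted. In particular, the indeterminacy of $\langle a;b_1,b_2,b_3\rangle$ is a subset of $$\langle b_1,a,b_2\rangle\wedge H(\mathcal A)+\langle b_2,a,b_3\rangle\wedge H(\mathcal A)+\langle b_3,a,b_1\rangle\wedge H(\mathcal A),$$ where $\langle\cdot,\cdot,\cdot\rangle$ denotes the ordinary triple Massey product.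
   Context: A DGA is a graded-commutative differential graded algebra over $\mathbb R$; $|x|$ denotes degree and $\overline{x}=(-1)^{|x|}x$. Given closed $a,b_1,\dots,b_n$ with $|a|$ even and each $a\wedge b_i$ exact, the $a$-Massey product is $\langle a;b_1,\dots,b_n\rangle=\{[\sum_{i=1}^n\overline{\xi_1}\wedge\cdots\wedge\overline{\xi_{i-1}}\wedge b_i\wedge\xi_{i+1}\wedge\cdots\wedge\xi_n] : d\xi_i=a\wedge b_i\}\subset H(\mathcal A)$. For closed $x_1,x_2,x_3$ with $x_1\wedge x_2$, $x_2\wedge x_3$ exact, the triple Massey product is $\langle x_1,x_2,x_3\rangle=\{[x_1\wedge x_{2,3}+(-1)^{|x_1|+1}x_{1,2}\wedge x_3] : dx_{1,2}=x_1\wedge x_2,\ dx_{2,3}=x_2\wedge x_3\}$. For subsets $S,T\subset H(\mathcal A)$, $S\wedge T$ and $S+T$ denote the sets of products and sums of elements. *)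

From HB Require Import structures.
From mathcomp Require Import all_boot all_order all_algebra.
From mathcomp Require Import Rstruct.
From Stdlib Require Rdefinitions.
Notation R := Rdefinitions.R.

Set Implicit Arguments.
Unset Strict Implicit.
Unset Printing Implicit Defensive.

Import Order.TTheory GRing.Theory Num.Theory.
Local Open Scope ring_scope.

(* The carrier A is an (associative, unital) R-algebra; [deg k x] means
   "x is homogeneous of degree k", i.e. x \in A^k.  The axioms say that
   A = \bigoplus_k A^k as R-vector spaces, that the product is graded and
   graded-commutative, and that d is an R-linear derivation of degree +1
   with d \o d = 0. *)
Record is_DGA (A : algType R) (deg : nat -> A -> Prop) (d : A -> A) : Prop := {
  deg0 : forall k, deg k 0;
  degD : forall k x y, deg k x -> deg k y -> deg k (x + y);
  degZ : forall k (c : R) x, deg k x -> deg k (c *: x);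
  deg_decomp : forall x : A, exists (N : nat) (c : nat -> A),
      (forall k, deg k (c k)) /\ x = \sum_(k < N) c k;
  deg_indep : forall (N : nat) (c : nat -> A), (forall k, deg k (c k)) ->
      \sum_(k < N) c k = 0 -> forall k, (k < N)%N -> c k = 0;
  deg1 : deg 0 1;
  degM : forall p q x y, deg p x -> deg q y -> deg (p + q) (x * y);
  gcomm : forall p q x y, deg p x -> deg q y ->
      x * y = (-1) ^+ (p * q) * (y * x);
  d_linear : forall (c : R) x y, d (c *: x + y) = c *: d x + d y;
  d_deg : forall k x, deg k x -> deg k.+1 (d x);
  d_d : forall x, d (d x) = 0;
  d_leibniz : forall p x y, deg p x ->
      d (x * y) = d x * y + (-1) ^+ p * (x * d y)
}.

Section DGADefs.
Variables (A : algType R) (deg : nat -> A -> Prop) (d : A -> A).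

Definition is_closed (x : A) : Prop := d x = 0.
Definition is_exact (x : A) : Prop := exists y, x = d y.
(* u and v are closed representatives of the same cohomology class iff
   u - v is exact; cohomology classes are handled through representatives. *)
Definition cohom (u v : A) : Prop := is_exact (u - v).

(* [in_degm1 m x] : x \in A^{m-1}  (with A^{-1} = 0). *)
Definition in_degm1 (m : nat) (x : A) : Prop :=
  if m is k.+1 then deg k x else x = 0.

(* \bar x = (-1)^{|x|} x for x \in A^{m-1}. *)
Definition bar_m1 (m : nat) (x : A) : A := (-1) ^+ m.-1 * x.

(* u represents an element of the a-Massey product <a; b_1, ..., b_n>,
   where |a| = da and |b_i| = db i; xi i \in A^{|a|+|b_i|-1}. *)
Definition amassey_rep (n : nat) (a : A) (da : nat)
    (b : 'I_n -> A) (db : 'I_n -> nat) (u : A) : Prop :=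
  exists xi : 'I_n -> A,
    (forall i, in_degm1 (da + db i) (xi i)) /\
    (forall i, d (xi i) = a * b i) /\
    cohom u (\sum_(i < n) \prod_(j < n)
               (if (j < i)%N then bar_m1 (da + db j) (xi j)
                else if j == i then b i else xi j)).

(* u represents an element of the triple Massey product <x1, x2, x3>,
   with |x_i| = d_i; x12 \in A^{d1+d2-1}, x23 \in A^{d2+d3-1}. *)
Definition triple_rep (x1 : A) (d1 : nat) (x2 : A) (d2 : nat)
    (x3 : A) (d3 : nat) (u : A) : Prop :=
  exists x12 x23 : A,
    in_degm1 (d1 + d2) x12 /\ in_degm1 (d2 + d3) x23 /\
    d x12 = x1 * x2 /\ d x23 = x2 * x3 /\
    cohom u (x1 * x23 + (-1) ^+ d1.+1 * (x12 * x3)).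

End DGADefs.

(* Compare two defining systems xi, xi' of <a; b_1, ..., b_n>.  Replacing xi_t by
   xi'_t one index at a time telescopes u - u' into n differences.  In the t-th
   one only the factor xi_t changes; by graded commutativity it can be moved to
   the end of every product, with a Koszul sign that turns out not to depend on
   the summand.  What remains is (up to that sign) the sum of the a-Massey
   product <a; b_1, ..., ^b_t, ..., b_n> of the hybrid defining system, times
   xi'_t - xi_t, which is closed because both have boundary a b_t.  For n = 3,
   a two-fold a-Massey product <a; x, y> is an ordinary triple product
   <x, a, y>, and <b_1, a, b_3> = +-<b_3, a, b_1>. *)

From mathcomp Require Import all_boot all_algebra.
From mathcomp Require Import Rstruct.
From mathcomp Require Import zify.
Import GRing.Theory.
Local Open Scope ring_scope.

Set Implicit Arguments.
Unset Strict Implicit.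
Unset Printing Implicit Defensive.

Lemma big_nat_split_at (T : Type) (idx : T) (op : Monoid.law idx)
    (F : nat -> T) r n :
  (r <= n)%N ->
  \big[op/idx]_(0 <= i < n.+1) F i =
  op (\big[op/idx]_(0 <= i < r) F i) (op (F r) (\big[op/idx]_(r <= i < n) F i.+1)).
Proof.
by move=> le_rn; rewrite (big_cat_nat _ (n := r)) ?big_nat_recl //; lia.
Qed.

Lemma big_nat_bump (T : Type) (idx : T) (op : Monoid.law idx)
    (F : nat -> T) r n :
  (r <= n)%N ->
  \big[op/idx]_(0 <= i < n) F (bump r i) =
  op (\big[op/idx]_(0 <= i < r) F i) (\big[op/idx]_(r <= i < n) F i.+1).
Proof.
move=> le_rn; rewrite (big_cat_nat _ (n := r)) //=.
congr (op _ _); apply: eq_big_nat => i /andP[? ?]; congr F; rewrite /bump; lia.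
Qed.

Lemma sum_addb_succ_eq lo hi i : (lo <= hi)%N ->
  \big[addb/false]_(lo <= j < hi) (j.+1 == i) = (lo < i <= hi)%N.
Proof.
elim: hi => [|hi IH] le_lo_hi; first by rewrite big_geq //; lia.
have [lt_lo_hi | le_hi_lo] := ltnP lo hi.+1; last by rewrite big_geq //; lia.
by rewrite big_nat_recr //= IH //; lia.
Qed.

(* The summands of [amassey_rep], indexed by nat, with [m k] = |a| + |b_k|. *)
Definition amassey_term (A : algType R) (m : nat -> nat) (b x : nat -> A)
    (i j : nat) : A :=
  if (j < i)%N then bar_m1 (m j) (x j) else if j == i then b i else x j.

Definition amassey_sum (A : algType R) (m : nat -> nat) (b x : nat -> A)
    (n : nat) : A :=
  \sum_(0 <= i < n) \prod_(0 <= j < n) amassey_term m b x i j.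

Definition splice (T : Type) (x x' : nat -> T) (t k : nat) : T :=
  if (k < t)%N then x' k else x k.

(* The sign of moving [xi_r] behind [xi_(r+1)], ..., [xi_n] ([xi_k] has parity
   [~~ odd (m k)]). *)
Definition koszul_sign (m : nat -> nat) (n r : nat) : bool :=
  ~~ odd (m r) && \big[addb/false]_(r <= j < n) ~~ odd (m j.+1).

Lemma amassey_term_bump (A : algType R) m (b x : nat -> A) r i j :
  amassey_term (m \o bump r) (b \o bump r) (x \o bump r) i j =
  amassey_term m b x (bump r i) (bump r j).
Proof.
by rewrite /amassey_term /= !ltnNge leq_bump2 (inj_eq (can_inj (bumpK r))).
Qed.

Lemma eq_amassey_sum (A : algType R) m (b x y : nat -> A) n :
  (forall k, (k < n)%N -> x k = y k) -> amassey_sum m b x n = amassey_sum m b y n.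
Proof.
move=> eq_xy; apply: eq_big_nat => i _; apply: eq_big_nat => j /andP[_ lt_jn].
by rewrite /amassey_term !eq_xy.
Qed.

Lemma amassey_sum_ord (A : algType R) n da (db : 'I_n -> nat) (b xi : 'I_n -> A)
    (m : nat -> nat) (bn x : nat -> A) :
  (forall k : 'I_n, [/\ (da + db k)%N = m k, b k = bn k & xi k = x k]) ->
  \sum_(i < n) \prod_(j < n)
     (if (j < i)%N then bar_m1 (da + db j) (xi j) else if j == i then b i else xi j)
  = amassey_sum m bn x n.
Proof.
move=> eq_fam; rewrite /amassey_sum big_mkord; apply: eq_bigr => i _.
rewrite big_mkord; apply: eq_bigr => j _.
by have [-> _ ->] := eq_fam j; have [_ -> _] := eq_fam i.
Qed.

Lemma subrACA (V : zmodType) (x y z t : V) : x - y - (z - t) = (x - z) - (y - t).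
Proof. by rewrite !opprB addrACA [in RHS]addrACA [- y + _]addrC. Qed.

Lemma signr_oddE (S : pzRingType) m n : odd m = odd n -> (-1) ^+ m = (-1) ^+ n :> S.
Proof. by move=> eq_odd; rewrite -signr_odd eq_odd signr_odd. Qed.

Lemma inord_bump n (j : 'I_n.+1) (k : 'I_n) : inord (bump j k) = lift j k.
Proof. exact: (inord_val (lift j k)). Qed.

Section GradedAlgebra.

Variables (A : algType R) (deg : nat -> A -> Prop) (d : A -> A).
Hypothesis HA : is_DGA deg d.

Lemma dD x y : d (x + y) = d x + d y.
Proof. by have := d_linear HA 1 x y; rewrite !scale1r. Qed.

Lemma d0 : d 0 = 0.
Proof. by apply: (addrI (d 0)); rewrite -dD !addr0. Qed.

Lemma dN x : d (- x) = - d x.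
Proof. by have := d_linear HA (-1) x 0; rewrite !addr0 d0 addr0 !scaleN1r. Qed.

Lemma dB x y : d (x - y) = d x - d y.
Proof. by rewrite dD dN. Qed.

Lemma d_sign k x : d ((-1) ^+ k * x) = (-1) ^+ k * d x.
Proof. by rewrite -signr_odd !mulr_sign; case: odd; rewrite ?dN. Qed.

Lemma exact0 : is_exact d 0.
Proof. by exists 0; rewrite d0. Qed.

Lemma exactB x y : is_exact d x -> is_exact d y -> is_exact d (x - y).
Proof. by move=> [x' ->] [y' ->]; exists (x' - y'); rewrite dB. Qed.

Lemma exact_sign k x : is_exact d x -> is_exact d ((-1) ^+ k * x).
Proof. by move=> [x' ->]; exists ((-1) ^+ k * x'); rewrite d_sign. Qed.

Lemma cohom_refl u : cohom d u u.
Proof. by rewrite /cohom subrr; apply: exact0. Qed.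

Lemma deg_sign k p x : deg p x -> deg p ((-1) ^+ k * x).
Proof. by rewrite -signr_odd mulr_sign -scaleN1r; case: odd => // /(degZ HA). Qed.

Lemma in_degm1_sign k m x : in_degm1 deg m x -> in_degm1 deg m ((-1) ^+ k * x).
Proof. by case: m => [/= ->|m /=]; [rewrite mulr0 | apply: deg_sign]. Qed.

Lemma bar_m1E m x : in_degm1 deg m x -> bar_m1 m x = (-1) ^+ (~~ odd m) * x.
Proof.
by rewrite /bar_m1; case: m => [/= ->|m _]; rewrite ?mulr0 // negbK signr_odd.
Qed.

Definition has_parity (b : bool) (x : A) : Prop := exists k, deg k x /\ odd k = b.

Lemma parity_deg k x : deg k x -> has_parity (odd k) x.
Proof. by exists k. Qed.

Lemma parity0 b : has_parity b 0.
Proof. by exists (nat_of_bool b); split; [apply: (deg0 HA) | case: b]. Qed.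

Lemma parity1 : has_parity false 1.
Proof. exact: parity_deg (deg1 HA). Qed.

Lemma parityM b c x y :
  has_parity b x -> has_parity c y -> has_parity (b (+) c) (x * y).
Proof.
by move=> [p [degx <-]] [q [degy <-]]; rewrite -oddD; apply/parity_deg/(degM HA).
Qed.

Lemma parity_prod (p : nat -> bool) (F : nat -> A) lo hi :
  (forall j, has_parity (p j) (F j)) ->
  has_parity (\big[addb/false]_(lo <= j < hi) p j) (\prod_(lo <= j < hi) F j).
Proof.
move=> parF; apply: (big_ind2 has_parity) => //; first exact: parity1.
by move=> ? ? ? ?; apply: parityM.
Qed.

Lemma parity_sign b k x : has_parity b x -> has_parity b ((-1) ^+ k * x).
Proof. by move=> [p [degx <-]]; apply/parity_deg/deg_sign. Qed.

Lemma parity_degm1 m x : in_degm1 deg m x -> has_parity (~~ odd m) x.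
Proof. by case: m => [/= ->|m /= /parity_deg]; [apply: parity0 | rewrite negbK]. Qed.

Lemma parity_comm b c x y :
  has_parity b x -> has_parity c y -> x * y = (-1) ^+ (b && c) * (y * x).
Proof.
by move=> [p [degx <-]] [q [degy <-]]; rewrite (gcomm HA degx degy) -oddM signr_odd.
Qed.

Lemma prod_move_factor_last (p : nat -> bool) (F : nat -> A) n r :
  (r <= n)%N -> (forall j, has_parity (p j) (F j)) ->
  \prod_(0 <= j < n.+1) F j =
  \prod_(0 <= j < n) F (bump r j) *
    ((-1) ^+ (p r && \big[addb/false]_(r <= j < n) p j.+1) * F r).
Proof.
move=> le_rn parF; rewrite (big_nat_split_at _ _ le_rn) (big_nat_bump _ _ le_rn).
have /= parR := parity_prod r n (fun j => parF j.+1).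
rewrite (parity_comm (parF r) parR).
by rewrite -mulrA [_ * (_ * F r)]mulrA -(commr_sign _ _) -!mulrA.
Qed.

Section AMasseySum.

Variables (m : nat -> nat) (b : nat -> A).
Hypothesis parity_b : forall k, has_parity (odd (m k)) (b k).

Lemma parity_amassey_term x i j :
  (forall k, in_degm1 deg (m k) (x k)) ->
  has_parity (~~ odd (m j) (+) (j == i)) (amassey_term m b x i j).
Proof.
move=> degx; rewrite /amassey_term; case: ltnP => [lt_ji|le_ij].
  by rewrite ltn_eqF // addbF bar_m1E //; apply/parity_sign/parity_degm1.
case: eqP => [->|_]; first by rewrite addbT negbK.
by rewrite addbF; apply: parity_degm1.
Qed.

Lemma amassey_prod_change x x' n r i :
  (r <= n)%N -> (i <= n)%N -> i != r -> (forall k, k != r -> x' k = x k) ->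
  (forall k, in_degm1 deg (m k) (x k)) -> (forall k, in_degm1 deg (m k) (x' k)) ->
  \prod_(0 <= j < n.+1) amassey_term m b x' i j -
    \prod_(0 <= j < n.+1) amassey_term m b x i j =
  \prod_(0 <= j < n) amassey_term m b x' i (bump r j) *
    ((-1) ^+ koszul_sign m n r * (x' r - x r)).
Proof.
move=> le_rn le_in neq_ir eq_x degx degx'.
rewrite (prod_move_factor_last le_rn (fun j => parity_amassey_term i j degx')).
rewrite (prod_move_factor_last le_rn (fun j => parity_amassey_term i j degx)).
have -> : \prod_(0 <= j < n) amassey_term m b x i (bump r j) =
          \prod_(0 <= j < n) amassey_term m b x' i (bump r j).
  by apply: eq_bigr => j _; rewrite /amassey_term eq_x // eq_sym neq_bump.
rewrite -!mulrBr; congr (_ * _).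
have -> : amassey_term m b x' i r - amassey_term m b x i r =
          (-1) ^+ ((r < i)%N && ~~ odd (m r)) * (x' r - x r).
  rewrite /amassey_term eq_sym (negbTE neq_ir).
  by case: ltnP => _; rewrite ?bar_m1E // -?mulrBr ?mul1r.
(* The bar sign of the moved factor cancels the extra parity [r < i] of the
   factors behind it, so the sign does not depend on [i]. *)
rewrite mulrA -signr_addb /koszul_sign eq_sym (negbTE neq_ir) addbF.
rewrite big_split /= sum_addb_succ_eq // le_in andbT.
congr (_ ^+ _ * _).
by case: (r < i)%N; case: (~~ odd (m r)); case: (\big[addb/false]_(r <= j < n) _).
Qed.

Lemma amassey_sum_change x x' n r :
  (r <= n)%N -> (forall k, k != r -> x' k = x k) ->
  (forall k, in_degm1 deg (m k) (x k)) -> (forall k, in_degm1 deg (m k) (x' k)) ->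
  amassey_sum m b x' n.+1 - amassey_sum m b x n.+1 =
  amassey_sum (m \o bump r) (b \o bump r) (x' \o bump r) n *
    ((-1) ^+ koszul_sign m n r * (x' r - x r)).
Proof.
move=> le_rn eq_x degx degx'.
set c := (-1) ^+ koszul_sign m n r * (x' r - x r).
pose G i := \prod_(0 <= j < n) amassey_term m b x' i (bump r j) * c.
have -> : amassey_sum (m \o bump r) (b \o bump r) (x' \o bump r) n * c =
          \sum_(0 <= i < n) G (bump r i).
  by rewrite mulr_suml; apply: eq_bigr => i _; under eq_bigr do rewrite amassey_term_bump.
rewrite /amassey_sum -sumrB (big_nat_split_at _ _ le_rn) (big_nat_bump _ _ le_rn) /=.
have -> : \prod_(0 <= j < n.+1) amassey_term m b x' r j =
          \prod_(0 <= j < n.+1) amassey_term m b x r j.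
  apply: eq_bigr => j _; rewrite /amassey_term.
  by case: (eqVneq j r) => [->|neq_jr]; rewrite ?ltnn ?eqxx ?eq_x.
rewrite subrr add0r; congr (_ + _); apply: eq_big_nat => i /andP[? ?];
  by apply: amassey_prod_change => //; try apply/eqP; lia.
Qed.

Lemma amassey_sum_telescope x x' n :
  (forall k, in_degm1 deg (m k) (x k)) -> (forall k, in_degm1 deg (m k) (x' k)) ->
  amassey_sum m b x' n.+1 - amassey_sum m b x n.+1 =
  \sum_(0 <= t < n.+1)
    amassey_sum (m \o bump t) (b \o bump t) (splice x x' t.+1 \o bump t) n *
    ((-1) ^+ koszul_sign m n t * (x' t - x t)).
Proof.
move=> degx degx'.
have degs t k : in_degm1 deg (m k) (splice x x' t k) by rewrite /splice; case: ifP.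
rewrite (@eq_amassey_sum _ _ _ x' (splice x x' n.+1)); last first.
  by move=> k lt_kn; rewrite /splice lt_kn.
have -> : amassey_sum m b x n.+1 = amassey_sum m b (splice x x' 0) n.+1 by [].
apply/esym/(telescope_sumr_eq (fun t => amassey_sum m b (splice x x' t) n.+1)) => //.
move=> t /andP[_]; rewrite ltnS => le_tn.
rewrite (amassey_sum_change le_tn) //; first by rewrite /splice ltnn leqnn.
by move=> k neq_kt; rewrite /splice ltnS leq_eqVlt (negbTE neq_kt).
Qed.

End AMasseySum.

Lemma amassey_indeterminacy n a da (b : 'I_n.+1 -> A) (db : 'I_n.+1 -> nat) :
  ~~ odd da -> (forall i, deg (db i) (b i)) -> forall u u',
  amassey_rep deg d a da b db u -> amassey_rep deg d a da b db u' ->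
  exists y h : 'I_n.+1 -> A,
    (forall j : 'I_n.+1, amassey_rep deg d a da
        (fun k : 'I_n => b (lift j k)) (fun k : 'I_n => db (lift j k)) (y j)) /\
    (forall j, is_closed d (h j)) /\
    cohom d (u - u') (\sum_(j < n.+1) y j * h j).
Proof.
move=> even_da degb u u' [xi [degxi [dxi cu]]] [xi' [degxi' [dxi' cu']]].
pose m k := (da + db (inord k))%N; pose bn k := b (inord k).
pose x k := xi (inord k); pose x' k := xi' (inord k).
have degx k : in_degm1 deg (m k) (x k) by apply: degxi.
have degx' k : in_degm1 deg (m k) (x' k) by apply: degxi'.
have parb k : has_parity (odd (m k)) (bn k).
  by rewrite /m oddD (negbTE even_da); apply/parity_deg/degb.
have sum_ord (xs : 'I_n.+1 -> A) :
    \sum_(i < n.+1) \prod_(j < n.+1)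
      (if (j < i)%N then bar_m1 (da + db j) (xs j) else if j == i then b i else xs j)
    = amassey_sum m bn (fun k => xs (inord k)) n.+1.
  by apply: amassey_sum_ord => k; rewrite /m /bn inord_val.
pose z (j : nat) := splice x x' j.+1 \o bump j.
exists (fun j => amassey_sum (m \o bump j) (bn \o bump j) (z j) n).
exists (fun j => - ((-1) ^+ koszul_sign m n j * (x' j - x j))).
split; [|split].
- move=> j; exists (fun k => z j k); split; [|split] => [k|k|].
  + by rewrite /z /splice /x /x' /= inord_bump; case: ifP.
  + by rewrite /z /splice /x /x' /= inord_bump; case: ifP.
  + rewrite (@amassey_sum_ord _ _ _ _ _ _ (m \o bump j) (bn \o bump j) (z j)).
      exact: cohom_refl.
    by move=> k; rewrite /m /bn /= inord_bump.
- move=> j; rewrite /is_closed dN d_sign dB /x /x' inord_val dxi dxi'.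
  by rewrite subrr mulr0 oppr0.
have -> : \sum_(j < n.+1) amassey_sum (m \o bump j) (bn \o bump j) (z j) n *
            - ((-1) ^+ koszul_sign m n j * (x' j - x j)) =
          amassey_sum m bn x n.+1 - amassey_sum m bn x' n.+1.
  rewrite -opprB (amassey_sum_telescope parb _ degx degx') big_mkord -sumrN.
  by apply: eq_bigr => t _; rewrite mulrN.
rewrite /cohom subrACA; apply: exactB; [move: cu | move: cu']; by rewrite /cohom sum_ord.
Qed.

Lemma commute_even p q x y : deg p x -> ~~ odd p -> deg q y -> y * x = x * y.
Proof.
move=> degx even_p degy.
by rewrite (gcomm HA degy degx) -signr_odd oddM (negbTE even_p) andbF mul1r.
Qed.

Lemma triple_rep_of_amassey2 a da (b : 'I_2 -> A) (db : 'I_2 -> nat) u :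
  deg da a -> ~~ odd da -> amassey_rep deg d a da b db u ->
  deg (db ord0) (b ord0) ->
  triple_rep deg d (b ord0) (db ord0) a da (b ord_max) (db ord_max) u.
Proof.
move=> dega even_da [xi [degxi [dxi cu]]] degb0.
exists (xi ord0), (xi ord_max); split; first by rewrite addnC.
split; first exact: degxi.
split; first by rewrite dxi (commute_even dega even_da degb0).
split; first exact: dxi.
move: cu; rewrite !big_ord_recr !big_ord0 /= !mul1r !add0r.
have -> : widen_ord (leqnSn 1) ord_max = ord0 :> 'I_2 by apply/val_inj.
by rewrite bar_m1E // -mulrA oddD (negbTE even_da) -[(-1) ^+ (db ord0).+1]signr_odd.
Qed.

Lemma triple_rep_rev x1 d1 x2 d2 x3 d3 u :
  deg d1 x1 -> deg d2 x2 -> deg d3 x3 ->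
  triple_rep deg d x1 d1 x2 d2 x3 d3 u ->
  triple_rep deg d x3 d3 x2 d2 x1 d1
    ((-1) ^+ (d1 * d2 + d2 * d3 + d3 * d1 + d1 + d3).+1 * u).
Proof.
move=> deg1 deg2 deg3 [x12 [x23 [deg12 [deg23 [dx12 [dx23 cu]]]]]].
exists ((-1) ^+ (d2 * d3) * x23), ((-1) ^+ (d1 * d2) * x12).
split; first by rewrite addnC; apply: in_degm1_sign.
split; first by rewrite addnC; apply: in_degm1_sign.
split; first by rewrite d_sign dx23 (gcomm HA deg3 deg2) mulnC.
split; first by rewrite d_sign dx12 (gcomm HA deg2 deg1) mulnC.
have -> : x3 * ((-1) ^+ (d1 * d2) * x12) +
            (-1) ^+ d3.+1 * ((-1) ^+ (d2 * d3) * x23 * x1) =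
          (-1) ^+ (d1 * d2 + d2 * d3 + d3 * d1 + d1 + d3).+1 *
            (x1 * x23 + (-1) ^+ d1.+1 * (x12 * x3)).
  rewrite [x3 * _]mulrA (commr_sign x3) -!mulrA.
  rewrite (parity_comm (parity_deg deg3) (parity_degm1 deg12)).
  rewrite (parity_comm (parity_degm1 deg23) (parity_deg deg1)).
  rewrite addrC mulrDr !mulrA -!exprD.
  congr (_ * _ * _ + _ * _ * _); apply: signr_oddE;
    rewrite !(oddS, oddD, oddM, oddb); by case: (odd d1); case: (odd d2); case: (odd d3).
by rewrite /cohom -mulrBr; apply: exact_sign.
Qed.

End GradedAlgebra.

Theorem proposition2p7 (A : algType R) (deg : nat -> A -> Prop) (d : A -> A)
    (HA : is_DGA deg d) :
  (forall (n : nat) (a : A) (da : nat) (b : 'I_n.+1 -> A) (db : 'I_n.+1 -> nat),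
     deg da a -> ~~ odd da -> is_closed d a ->
     (forall i, deg (db i) (b i)) -> (forall i, is_closed d (b i)) ->
     (forall i, is_exact d (a * b i)) ->
     forall u u' : A,
       amassey_rep deg d a da b db u -> amassey_rep deg d a da b db u' ->
       exists y h : 'I_n.+1 -> A,
         (forall j : 'I_n.+1, amassey_rep deg d a da
              (fun k : 'I_n => b (lift j k)) (fun k : 'I_n => db (lift j k)) (y j)) /\
         (forall j, is_closed d (h j)) /\
         cohom d (u - u') (\sum_(j < n.+1) y j * h j))
  /\
  (forall (a : A) (da : nat) (b1 b2 b3 : A) (db1 db2 db3 : nat),
     deg da a -> ~~ odd da -> is_closed d a ->
     deg db1 b1 -> deg db2 b2 -> deg db3 b3 ->
     is_closed d b1 -> is_closed d b2 -> is_closed d b3 ->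
     is_exact d (a * b1) -> is_exact d (a * b2) -> is_exact d (a * b3) ->
     forall u u' : A,
       amassey_rep deg d a da (fun i : 'I_3 => [:: b1; b2; b3]`_i)
                   (fun i : 'I_3 => nth 0%N [:: db1; db2; db3] i) u ->
       amassey_rep deg d a da (fun i : 'I_3 => [:: b1; b2; b3]`_i)
                   (fun i : 'I_3 => nth 0%N [:: db1; db2; db3] i) u' ->
       exists y1 y2 y3 h1 h2 h3 : A,
         triple_rep deg d b1 db1 a da b2 db2 y1 /\
         triple_rep deg d b2 db2 a da b3 db3 y2 /\
         triple_rep deg d b3 db3 a da b1 db1 y3 /\
         is_closed d h1 /\ is_closed d h2 /\ is_closed d h3 /\
         cohom d (u - u') (y1 * h1 + y2 * h2 + y3 * h3)).
Proof.
split=> [n a da b db _ even_da _ degb _ _|]; first exact: amassey_indeterminacy.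
move=> a da b1 b2 b3 db1 db2 db3 dega even_da _ deg1 deg2 deg3 _ _ _ _ _ _ u u' hu hu'.
have [|y [h [hy [closed_h cohom_uu']]]] := amassey_indeterminacy HA even_da _ hu hu'.
  by case=> [[|[|[|?]]] ?].
pose i1 : 'I_3 := Ordinal (isT : (1 < 3)%N).
pose s := (-1) ^+ (db1 * da + da * db3 + db3 * db1 + db1 + db3).+1 : A.
exists (y ord_max), (y ord0), (s * y i1), (h ord_max), (h ord0), (s * h i1).
have rep12 := triple_rep_of_amassey2 HA dega even_da (hy ord_max) deg1.
have rep23 := triple_rep_of_amassey2 HA dega even_da (hy ord0) deg2.
have /= rep13 := triple_rep_of_amassey2 HA dega even_da (hy i1) deg1.
split; first exact: rep12.
split; first exact: rep23.
have rep31 := triple_rep_rev HA deg1 dega deg3 rep13.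
split; first exact: rep31.
do 2!split=> //; split; first by rewrite /is_closed (d_sign HA) closed_h mulr0.
have sum3 (F : 'I_3 -> A) : \sum_(j < 3) F j = F ord0 + F i1 + F ord_max.
  by rewrite !big_ord_recl big_ord0 addr0 addrA; congr (_ + F _ + F _); apply/val_inj.
have sign_sq : s * y i1 * (s * h i1) = y i1 * h i1.
  by rewrite /s -signr_odd mulr_signM addbb mul1r.
by rewrite sign_sq; rewrite sum3 (addrC _ (y ord_max * h ord_max)) addrA in cohom_uu'.
Qed.
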